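(* Let $R$ be a ring. The following conditions are equivalent for a complex $F$ of left $R$-modules. (1) $F$ is exact and every cycle $Z_n(F)$ is a projective module. (2) Every morphism $X\to F$ with $X$ a bounded complex factors through a projective complex. (3) Every morphism $X\to F$ with $X$ a bounded below complex factors through a projective complex. (4) Every morphism of complexes $X\to F$ factors through a projective complex.
   Context: Complexes are homologically indexed, $Z_n(F)=\mathrm{Ker}\,d_n^F$; a complex $X$ is bounded below if there is $b$ with $X_n=0$ for all $n\le b$, and bounded if additionally $X_n=0$ for all sufficiently large $n$. *)

From HB Require Import structures.
From mathcomp Require Import all_boot all_order all_algebra.
Set Implicit Arguments. Unset Strict Implicit. Unset Printing Implicit Defensive.
Import Order.TTheory GRing.Theory Num.Theory.
Local Open Scope ring_scope.

Record complex (R : pzRingType) := Complex {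
  cobj :> int -> lmodType R;
  cdiff : forall n : int, {linear cobj n -> cobj (n - 1)};
  cdiff2 : forall (n : int) (x : cobj n), cdiff (n - 1) (cdiff n x) = 0 }.
Arguments cdiff {R} c n.
Arguments cobj {R} c n.

Record chain_map (R : pzRingType) (X Y : complex R) := ChainMap {
  cmap :> forall n : int, {linear X n -> Y n};
  cmap_comm : forall (n : int) (x : X n),
      cmap (n - 1) (cdiff X n x) = cdiff Y n (cmap n x) }.
Arguments cmap {R X Y} c n.

Definition projective_module (R : pzRingType) (P : lmodType R) : Prop :=
  forall (M N : lmodType R) (p : {linear M -> N}) (g : {linear P -> N}),
    (forall y : N, exists x : M, p x = y) ->
    exists h : {linear P -> M}, forall x : P, p (h x) = g x.

(* projective complex: projective object of the category of complexes,
   i.e. lifting property against epimorphisms (= degreewise surjective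
   chain maps) *)
Definition projective_complex (R : pzRingType) (P : complex R) : Prop :=
  forall (M N : complex R) (p : chain_map M N) (g : chain_map P N),
    (forall (n : int) (y : N n), exists x : M n, p n x = y) ->
    exists h : chain_map P M, forall (n : int) (x : P n), p n (h n x) = g n x.

Definition factors_through_projective (R : pzRingType) (X F : complex R)
    (f : chain_map X F) : Prop :=
  exists (P : complex R) (g : chain_map X P) (h : chain_map P F),
    projective_complex P /\ forall (n : int) (x : X n), f n x = h n (g n x).

Definition cycle_pred (R : pzRingType) (F : complex R) (n : int) : {pred (cobj F n)} :=
  fun x => cdiff F n x == 0.
Arguments cycle_pred {R} F n.

Lemma cycle_pred_closed (R : pzRingType) (F : complex R) (n : int) :
  GRing.subsemimod_closed (cycle_pred F n).
Proof.
split; first split.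
- by rewrite /in_mem /= /cycle_pred raddf0.
- move=> x y; rewrite /in_mem /= /cycle_pred => /eqP Hx /eqP Hy.
  rewrite raddfD; apply/eqP; transitivity (0 + 0 : cobj F (n - 1)).
    by congr (_ + _); [exact: Hx | exact: Hy].
  exact: addr0.
- move=> a x; rewrite /in_mem /= /cycle_pred => /eqP Hx.
  rewrite linearZ /=; apply/eqP; transitivity (a *: (0 : cobj F (n - 1))).
    by congr (_ *: _); exact: Hx.
  exact: scaler0.
Qed.

HB.instance Definition _ (R : pzRingType) (F : complex R) (n : int) :=
  GRing.isSubmodClosed.Build R (F n) (cycle_pred F n) (cycle_pred_closed F n).

Record cycles (R : pzRingType) (F : complex R) (n : int) := Cycle {
  cycle_val :> F n; _ : cycle_val \in cycle_pred F n }.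

HB.instance Definition _ (R : pzRingType) (F : complex R) (n : int) :=
  [isSub for @cycle_val R F n].
HB.instance Definition _ (R : pzRingType) (F : complex R) (n : int) :=
  [Choice of cycles F n by <:].
HB.instance Definition _ (R : pzRingType) (F : complex R) (n : int) :=
  [SubChoice_isSubLmodule of cycles F n by <:].

Definition boundary (R : pzRingType) (F : complex R) (n : int) (x : F n) : Prop :=
  exists y : F (n + 1),
    eq_rect ((n + 1) - 1) (fun k => F k) (cdiff F (n + 1) y) n (addrK 1 n) = x.

Definition exact_complex (R : pzRingType) (F : complex R) : Prop :=
  forall (n : int) (x : F n), cdiff F n x = 0 -> boundary x.

Definition zero_module_at (R : pzRingType) (X : complex R) (n : int) : Prop :=
  forall x : X n, x = 0.

Definition bounded_below (R : pzRingType) (X : complex R) : Prop :=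
  exists b : int, forall n : int, n <= b -> zero_module_at X n.

Definition bounded_complex (R : pzRingType) (X : complex R) : Prop :=
  bounded_below X /\ exists t : int, forall n : int, t <= n -> zero_module_at X n.

(* If F is exact with projective cycles, each d_n : F_n -> Z_(n-1)
   has a linear section, and F is itself a projective complex: to lift
   g : F -> N along an epimorphism p : M -> N, lift g o sigma along p to maps
   a : Z_n -> M_(n+1) and send x to a(d x) + d a(x - sigma(d x)); every map into
   F then factors through F.  Conversely, factor the inclusion of Z_n(F),
   viewed as a complex concentrated in degree n, through a projective complex
   P.  Lifting the identity of P along the epimorphism onto P from a sum of
   disks shows that every cycle of P is a boundary, through a linear section
   s; pushing this forward to F proves exactness at n and exhibits Z_n(F) as a
   retract of P_n, which is a projective module. *)

From HB Require Import structures.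
From mathcomp Require Import all_boot all_order all_algebra zify.
From Stdlib Require Import ChoiceFacts ClassicalEpsilon.
Set Implicit Arguments. Unset Strict Implicit. Unset Printing Implicit Defensive.
Import GRing.Theory.
Local Open Scope ring_scope.

Definition as_linear (R : pzRingType) (U V : lmodType R) (f : U -> V)
    (fL : linear f) : {linear U -> V} :=
  HB.pack f (GRing.isLinear.Build R U V *:%R f fL).

Lemma dependent_choice : DependentFunctionalChoice.
Proof. exact: non_dep_dep_functional_choice choice. Qed.

Section Complexes.
Variable R : pzRingType.
Implicit Types X Y : complex R.

(* Degrees such as [n + 1 - 1] and [n] are equal but not convertible, so
   elements are moved between them by transport. *)
Definition tr X (a b : int) (e : a = b) (x : X a) : X b :=
  eq_rect a (fun k => X k) x b e.

Lemma tr_is_linear X a b (e : a = b) : linear (@tr X a b e).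
Proof. by case: b / e. Qed.
HB.instance Definition _ X a b e :=
  GRing.isLinear.Build R (X a) (X b) *:%R (@tr X a b e) (tr_is_linear e).

Lemma tr_id X a (e : a = a) (x : X a) : tr e x = x.
Proof. by rewrite (eq_irrelevance e erefl). Qed.

Lemma tr_irr X a b (e e' : a = b) (x : X a) : tr e x = tr e' x.
Proof. by rewrite (eq_irrelevance e e'). Qed.

Lemma tr_trans X a b c (e1 : a = b) (e2 : b = c) (e3 : a = c) (x : X a) :
  tr e2 (tr e1 x) = tr e3 x.
Proof. by move: e3; case: c / e2 => e3; rewrite [LHS]tr_id; apply: tr_irr. Qed.

Lemma tr_inj X a b (e : a = b) : injective (@tr X a b e).
Proof. by case: b / e. Qed.

Lemma cmap_tr X Y (f : chain_map X Y) a b (e : a = b) (x : X a) :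
  f b (tr e x) = tr e (f a x).
Proof. by case: b / e. Qed.

Lemma cdiff_tr X a b (e : a = b) (x : X a) :
  cdiff X b (tr e x) = tr (congr1 (fun k => k - 1) e) (cdiff X a x).
Proof. by case: b / e. Qed.

Definition bdry X n : {linear X (n + 1) -> X n} :=
  tr (addrK 1 n) \o cdiff X (n + 1).

Lemma cdiff_bdry X n (y : X (n + 1)) : cdiff X n (bdry X n y) = 0.
Proof. by rewrite /bdry /= cdiff_tr cdiff2 linear0. Qed.

Lemma cmap_bdry X Y (f : chain_map X Y) n (y : X (n + 1)) :
  f n (bdry X n y) = bdry Y n (f (n + 1) y).
Proof. by rewrite /bdry /= cmap_tr cmap_comm. Qed.

Lemma cdiff_tr_subrK X n (y : X (n - 1 + 1)) :
  cdiff X n (tr (subrK 1 n) y) = bdry X (n - 1) y.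
Proof. by rewrite cdiff_tr /bdry /=; apply: tr_irr. Qed.

Lemma bdry_tr_subrK X n (x : X n) :
  bdry X (n - 1) (tr (esym (subrK 1 n)) x) = cdiff X n x.
Proof. by rewrite -cdiff_tr_subrK tr_trans tr_id. Qed.

Definition tr_or_zero X a b (x : X a) : X b :=
  if a =P b is ReflectT e then tr e x else 0.

Lemma tr_or_zero_is_linear X a b : linear (@tr_or_zero X a b).
Proof.
rewrite /tr_or_zero; case: eqP => e r x y; first exact: linearP.
by rewrite scaler0 addr0.
Qed.

HB.instance Definition _ X a b :=
  GRing.isLinear.Build R (X a) (X b) *:%R (@tr_or_zero X a b)
    (@tr_or_zero_is_linear X a b).

Lemma tr_or_zero_id X a (x : X a) : tr_or_zero a x = x.
Proof. by rewrite /tr_or_zero; case: eqP => // e; rewrite tr_id. Qed.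

Section ToCycles.
Variables (X : complex R) (n : int) (U : lmodType R) (f : {linear U -> X n}).
Hypothesis cdiff_f : forall u, cdiff X n (f u) = 0.

Lemma to_cycles_is_linear : linear (fun u => Cycle (introT eqP (cdiff_f u))).
Proof. by move=> r x y; apply: val_inj; rewrite /= linearP. Qed.

Definition to_cycles : {linear U -> cycles X n} :=
  as_linear to_cycles_is_linear.

End ToCycles.

Definition bdryZ X n : {linear X (n + 1) -> cycles X n} :=
  to_cycles (@cdiff_bdry X n).

Definition dZ X n : {linear X n -> cycles X (n - 1)} :=
  to_cycles (@cdiff2 R X n).

Lemma bdryZE X n y : val (bdryZ X n y) = bdry X n y.
Proof. by []. Qed.

Definition chain_id X : chain_map X X :=
  @ChainMap _ X X (fun=> idfun) (fun _ _ => erefl).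

End Complexes.

Lemma projective_module_retract (R : pzRingType) (P Z : lmodType R)
    (i : {linear Z -> P}) (r : {linear P -> Z}) :
  cancel i r -> projective_module P -> projective_module Z.
Proof.
move=> iK HP M N q u q_surj.
have [k Hk] := HP M N q (u \o r) q_surj.
by exists (k \o i) => z; rewrite /= Hk /= iK.
Qed.

Lemma projective_lift_family (R : pzRingType) (I : Type)
    (P M N : I -> lmodType R) (q : forall i, {linear M i -> N i})
    (u : forall i, {linear P i -> N i}) :
  (forall i, projective_module (P i)) ->
  (forall i (y : N i), exists x, q i x = y) ->
  exists v : forall i, {linear P i -> M i}, forall i x, q i (v i x) = u i x.
Proof.
move=> HP q_surj.
apply: (@dependent_choice I (fun i => {linear P i -> M i})
  (fun i v => forall x, q i (v x) = u i x)) => i.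
exact: HP i _ _ (q i) (u i) (q_surj i).
Qed.

Section Disk.
Variable R : pzRingType.

(* [disk B] is the sum of the disks [B -> B] in all degrees, so chain maps
   into it are just families of linear maps [P k -> B]. *)
Section DiskComplex.
Variable B : lmodType R.

Definition disk_diff (x : B * B) : B * B := (x.2, 0).

Lemma disk_diff_is_linear : linear disk_diff.
Proof.
by move=> r x y; apply: injective_projections; rewrite /= ?scaler0 ?addr0.
Qed.

Definition disk : complex R :=
  @Complex R (fun=> (B * B)%type) (fun=> as_linear disk_diff_is_linear)
    (fun _ _ => erefl).

Variables (P : complex R) (phi : forall k, {linear P k -> B}).

Definition to_disk_fun m (x : P m) : B * B :=
  (phi m x, phi (m - 1) (cdiff P m x)).

Lemma to_disk_fun_is_linear m : linear (@to_disk_fun m).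
Proof. by move=> r x y; rewrite /to_disk_fun !linearP. Qed.

Lemma to_disk_fun_comm m (x : P m) :
  to_disk_fun (cdiff P m x) = disk_diff (to_disk_fun x).
Proof. by rewrite /to_disk_fun cdiff2 linear0. Qed.

Definition to_disk : chain_map P disk :=
  @ChainMap _ P disk (fun m => as_linear (@to_disk_fun_is_linear m))
    to_disk_fun_comm.

End DiskComplex.

Section DiskMap.
Variables (A B : lmodType R) (q : {linear A -> B}).

Definition disk_map_fun (x : A * A) : B * B := (q x.1, q x.2).

Lemma disk_map_fun_is_linear : linear disk_map_fun.
Proof. by move=> r x y; rewrite /disk_map_fun !linearP. Qed.

Lemma disk_map_fun_comm (x : A * A) :
  disk_map_fun (disk_diff x) = disk_diff (disk_map_fun x).
Proof. by rewrite /disk_map_fun linear0. Qed.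

Definition disk_map : chain_map (disk A) (disk B) :=
  @ChainMap _ (disk A) (disk B) (fun=> as_linear disk_map_fun_is_linear)
    (fun=> disk_map_fun_comm).

End DiskMap.

Lemma projective_complex_module (P : complex R) m :
  projective_complex P -> projective_module (P m).
Proof.
move=> HP A B q u q_surj.
pose phi k : {linear P k -> B} := u \o tr_or_zero m.
have [|h Hh] := HP (disk A) (disk B) (disk_map q) (to_disk phi).
  move=> k [y1 y2]; have [x1 <-] := q_surj y1; have [x2 <-] := q_surj y2.
  by exists (x1, x2).
have psi_lin : linear (fun x => (h m x).1) by move=> r x y; rewrite linearP.
exists (as_linear psi_lin) => x.
by have [/= ->] := Hh m x; rewrite tr_or_zero_id.
Qed.

End Disk.

(* In degree m, [disks P] is [P m * P (m + 1)]: the sum of the disks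
   [P m -> P m] in degrees m and m - 1. *)
Section Disks.
Variables (R : pzRingType) (P : complex R).

Definition disks_diff m (x : P m * P (m + 1)) : P (m - 1) * P (m - 1 + 1) :=
  (0, tr (esym (subrK 1 m)) x.1).

Lemma disks_diff_is_linear m : linear (@disks_diff m).
Proof.
move=> r x y.
by apply: injective_projections; rewrite /= ?linearP ?scaler0 ?addr0.
Qed.

Definition disks_lin m := as_linear (@disks_diff_is_linear m).

Lemma disks_diff2 m x : disks_lin (m - 1) (disks_lin m x) = 0.
Proof. by apply: injective_projections; rewrite //= linear0. Qed.

Definition disks : complex R := Complex disks_diff2.

Definition disks_aug_fun m (x : P m * P (m + 1)) : P m := x.1 + bdry P m x.2.

Lemma disks_aug_fun_is_linear m : linear (@disks_aug_fun m).
Proof. by move=> r x y; rewrite /disks_aug_fun !linearP scalerDr addrACA. Qed.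

Lemma disks_aug_fun_comm m (x : P m * P (m + 1)) :
  disks_aug_fun (disks_diff x) = cdiff P m (disks_aug_fun x).
Proof.
rewrite /disks_aug_fun /disks_diff [(0, _).1]/= [(_, _).2]/= add0r.
by rewrite bdry_tr_subrK linearD cdiff_bdry addr0.
Qed.

Definition disks_aug : chain_map disks P :=
  @ChainMap _ disks P (fun m => as_linear (@disks_aug_fun_is_linear m))
    disks_aug_fun_comm.

Lemma projective_complex_split :
  projective_complex P ->
  exists s : forall m, {linear P m -> P (m + 1)},
    forall m (w : P m), cdiff P m w = 0 -> bdry P m (s m w) = w.
Proof.
move=> HP; have [|h Hh] := HP disks P disks_aug (chain_id P).
  by move=> m y; exists (y, 0); rewrite /= /disks_aug_fun linear0 addr0.
have s_lin m : linear (fun w => (h m w).2) by move=> r x y; rewrite linearP.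
exists (fun m => as_linear (s_lin m)) => m w dw0 /=.
have h1_0 : (h m w).1 = 0.
  have := cmap_comm h w; rewrite dw0 linear0 => /(congr1 snd) /= /esym.
  by rewrite -(linear0 (tr (esym (subrK 1 m)))) => /tr_inj.
by have := Hh m w; rewrite /= /disks_aug_fun h1_0 add0r.
Qed.

End Disks.

Section SplitLifting.
Variables (R : pzRingType) (F : complex R).
Variable sigma : forall n, {linear cycles F n -> F (n + 1)}.
Hypothesis sigmaK : forall n z, bdryZ F n (sigma n z) = z.

Definition sigma_at n : {linear cycles F (n - 1) -> F n} :=
  tr (subrK 1 n) \o sigma (n - 1).

Lemma sigma_atE n z : sigma_at n z = tr (subrK 1 n) (sigma (n - 1) z).
Proof. by []. Qed.

Lemma cdiff_sigma_at n z : cdiff F n (sigma_at n z) = val z.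
Proof. by rewrite sigma_atE cdiff_tr_subrK -bdryZE sigmaK. Qed.

Lemma cdiff_cycle_part n (x : F n) :
  cdiff F n ((idfun \- (sigma_at n \o dZ F n)) x) = 0.
Proof. by rewrite /= linearB cdiff_sigma_at subrr. Qed.

Definition cycle_part n : {linear F n -> cycles F n} :=
  to_cycles (@cdiff_cycle_part n).

Variables (M N : complex R) (p : chain_map M N) (g : chain_map F N).
Variable a : forall n, {linear cycles F n -> M (n + 1)}.
Hypothesis aK : forall n z, p (n + 1) (a n z) = g (n + 1) (sigma n z).

Definition split_lift n : {linear F n -> M n} :=
  (tr (subrK 1 n) \o a (n - 1) \o dZ F n) \+ (bdry M n \o a n \o cycle_part n).

Lemma cycle_partE n x : val (cycle_part n x) = x - sigma_at n (dZ F n x).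
Proof. by []. Qed.

Lemma split_liftE n x :
  split_lift n x =
    tr (subrK 1 n) (a (n - 1) (dZ F n x)) + bdry M n (a n (cycle_part n x)).
Proof. by []. Qed.

Lemma split_lift_comm n (x : F n) :
  split_lift (n - 1) (cdiff F n x) = cdiff M n (split_lift n x).
Proof.
have dZ_cdiff : dZ F (n - 1) (cdiff F n x) = 0 by apply: val_inj; exact: cdiff2.
have cycle_part_cdiff : cycle_part (n - 1) (cdiff F n x) = dZ F n x.
  by apply: val_inj; rewrite cycle_partE dZ_cdiff linear0 subr0.
rewrite !split_liftE dZ_cdiff !linear0 add0r cycle_part_cdiff.
by rewrite linearD cdiff_tr_subrK cdiff_bdry addr0.
Qed.

Definition split_lift_map : chain_map F M := ChainMap split_lift_comm.

Lemma split_liftK n (x : F n) : p n (split_lift n x) = g n x.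
Proof.
rewrite split_liftE linearD cmap_tr cmap_bdry !aK -cmap_tr -cmap_bdry.
rewrite -bdryZE sigmaK.
by rewrite -linearD cycle_partE sigma_atE addrC; congr (g n _); exact: subrK.
Qed.

End SplitLifting.

Lemma exact_projective_cycles_complex (R : pzRingType) (F : complex R) :
  exact_complex F -> (forall n, projective_module (cycles F n)) ->
  projective_complex F.
Proof.
move=> Fex HZ.
have [|sigma sigmaK] :=
  projective_lift_family (fun n => idfun) HZ (q := bdryZ F).
  move=> n z; have [y yz] := Fex n (val z) (eqP (valP z)).
  by exists y; apply: val_inj.
move=> M N p g p_surj.
have [a aK] := projective_lift_family (fun n => g (n + 1) \o sigma n) HZ
  (fun n => p_surj (n + 1)).
by exists (split_lift_map sigmaK a) => n x; exact: split_liftK.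
Qed.

Section CyclesAt.
Variables (R : pzRingType) (F : complex R) (n : int).

Definition cycles_at_pred k : {pred F k} :=
  fun x => if k == n then x \in cycle_pred F k else x == 0.
Arguments cycles_at_pred : clear implicits.

Lemma cycles_at_pred_closed k : GRing.subsemimod_closed (cycles_at_pred k).
Proof.
rewrite /cycles_at_pred; case: (k == n); first exact: cycle_pred_closed.
split; first split.
- by rewrite /in_mem /=.
- by move=> x y; rewrite /in_mem /= => /eqP -> /eqP ->; rewrite addr0.
- by move=> a x; rewrite /in_mem /= => /eqP ->; rewrite scaler0.
Qed.

End CyclesAt.
Arguments cycles_at_pred {R} F n k.

HB.instance Definition _ (R : pzRingType) (F : complex R) (n k : int) :=
  GRing.isSubmodClosed.Build R (F k) (cycles_at_pred F n k)
    (cycles_at_pred_closed F n k).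

Record cycles_at (R : pzRingType) (F : complex R) (n k : int) := CyclesAt {
  cycles_at_val :> F k; _ : cycles_at_val \in cycles_at_pred F n k }.

HB.instance Definition _ (R : pzRingType) (F : complex R) (n k : int) :=
  [isSub for @cycles_at_val R F n k].
HB.instance Definition _ (R : pzRingType) (F : complex R) (n k : int) :=
  [Choice of cycles_at F n k by <:].
HB.instance Definition _ (R : pzRingType) (F : complex R) (n k : int) :=
  [SubChoice_isSubLmodule of cycles_at F n k by <:].

Section CyclesAtComplex.
Variables (R : pzRingType) (F : complex R) (n : int).

Definition cycles_at_complex : complex R :=
  @Complex R (cycles_at F n) (fun=> \0) (fun _ _ => erefl).

Lemma cycles_at_eq0 k (x : cycles_at F n k) : k != n -> x = 0.
Proof.
move=> kn; apply: val_inj; case: x => x /=.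
by rewrite /in_mem /= /cycles_at_pred (negbTE kn) => /eqP.
Qed.

Lemma cycles_at_cdiff k (x : cycles_at F n k) : cdiff F k (val x) = 0.
Proof.
case: x => x /=; rewrite /in_mem /= /cycles_at_pred.
by case: (k == n) => /eqP // ->; rewrite linear0.
Qed.

Lemma cycles_at_val_is_linear k : linear (@cycles_at_val R F n k).
Proof. by []. Qed.

Definition cycles_at_incl : chain_map cycles_at_complex F :=
  @ChainMap _ cycles_at_complex F
    (fun k => as_linear (@cycles_at_val_is_linear k))
    (fun k x => esym (cycles_at_cdiff x)).

Lemma cycles_at_bounded : bounded_complex cycles_at_complex.
Proof.
split; [exists (n - 1) | exists (n + 1)] => k kn x;
  by apply: cycles_at_eq0; apply/eqP => kE; move: kn; rewrite kE; lia.
Qed.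

End CyclesAtComplex.

Section CyclesAtFactor.
Variables (R : pzRingType) (F : complex R) (n : int).

Lemma cycle_in_cycles_at (z : cycles F n) : val z \in cycles_at_pred F n n.
Proof. by rewrite /in_mem /= /cycles_at_pred eqxx; case: z. Qed.

Lemma cycles_to_at_is_linear :
  linear (fun z => CyclesAt (cycle_in_cycles_at z)).
Proof. by move=> r x y; apply: val_inj. Qed.

Definition cycles_to_at : {linear cycles F n -> cycles_at F n n} :=
  as_linear cycles_to_at_is_linear.

Lemma exact_projective_cycles_of_factor :
  factors_through_projective (cycles_at_incl F n) ->
  [/\ forall x : F n, cdiff F n x = 0 -> boundary x
    & projective_module (cycles F n)].
Proof.
move=> [P [g [h [HP gh]]]].
have [s Hs] := projective_complex_split HP.
pose u : {linear cycles F n -> P n} := g n \o cycles_to_at.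
have du z : cdiff P n (u z) = 0.
  change (cdiff P n (g n (cycles_to_at z)) = 0).
  by rewrite -cmap_comm; exact: linear0.
have hu z : h n (u z) = val z by rewrite -gh.
pose rho : {linear P n -> cycles F n} := bdryZ F n \o h (n + 1) \o s n.
have rhoK : cancel u rho.
  move=> z; apply: val_inj.
  by rewrite -[RHS]hu -[in RHS](Hs _ _ (du z)) cmap_bdry.
split.
- move=> x dx0; pose z : cycles F n := Cycle (introT eqP dx0).
  by exists (h (n + 1) (s n (u z))); exact: (congr1 val (rhoK z)).
- exact: projective_module_retract rhoK (projective_complex_module HP).
Qed.

End CyclesAtFactor.

Lemma bounded_factors_exact_projective_cycles (R : pzRingType) (F : complex R) :
  (forall (X : complex R) (f : chain_map X F),
     bounded_complex X -> factors_through_projective f) ->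
  [/\ exact_complex F & forall n, projective_module (cycles F n)].
Proof.
move=> Hb; have Hn n :=
  exact_projective_cycles_of_factor (Hb _ _ (cycles_at_bounded F n)).
by split=> n; have [] := Hn n.
Qed.

Lemma projective_complex_factors (R : pzRingType) (X P : complex R)
    (f : chain_map X P) :
  projective_complex P -> factors_through_projective f.
Proof. by move=> HP; exists P, f, (chain_id P). Qed.

Theorem corollary3p9 (R : pzRingType) (F : complex R) :
  [<-> exact_complex F /\ (forall n : int, projective_module (cycles F n));
       forall (X : complex R) (f : chain_map X F),
         bounded_complex X -> factors_through_projective f;
       forall (X : complex R) (f : chain_map X F),
         bounded_below X -> factors_through_projective f;
       forall (X : complex R) (f : chain_map X F), factors_through_projective f].
Proof.
have factors_all :
    exact_complex F /\ (forall n, projective_module (cycles F n)) ->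
    forall (X : complex R) (f : chain_map X F), factors_through_projective f.
  move=> [Fex HZ] X f.
  exact/projective_complex_factors/exact_projective_cycles_complex.
tfae.
- by move=> H X f _; apply: factors_all.
- move=> /bounded_factors_exact_projective_cycles H X f _.
  exact: factors_all.
- move=> H; apply/factors_all/bounded_factors_exact_projective_cycles.
  by move=> X f [Xb _]; apply: H.
- move=> H; apply: bounded_factors_exact_projective_cycles => X f _.
  exact: H.
Qed.
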